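(* Let $A, m, e$ be constants and $\Lambda$ a constant, and on a region with coordinates $(y,x,\phi)$ where $F>0$ and $G>0$ consider the Riemannian metric \[ h_\Lambda = \frac{1}{F^2}\,dy^2 + \frac{1}{GF}\,dx^2 + \frac{G}{F}\,d\phi^2, \] with \[ F = F_\Lambda(y) = y^2 - 2mAy^3 + e^2A^2y^4 - 1 - \frac{\Lambda}{3A^2},\qquad G(x) = 1 - x^2 - 2mAx^3 - e^2A^2x^4 . \] Then for any two values $\Lambda_1,\Lambda_2$ (on a common domain where the metrics are defined) the metrics $h_{\Lambda_1}$ and $h_{\Lambda_2}$ are projectively equivalent via the identity map, i.e. they have the same unparametrised geodesics. In particular, the null geodesics of the cosmological $C$-metric \[ g = \frac{1}{A^2(x^2+y^2)}\Big(-F\,dt^2 + \frac{1}{F}dy^2 + \frac{1}{G}dx^2 + G\,d\phi^2\Big) \] project to curves (the unparametrised geodesics of its optical metric $h_\Lambda$) that do not depend on $\Lambda$.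
   Context: The metric $h_\Lambda$ is the optical metric of the cosmological $C$-metric $g$ with respect to the static Killing vector $\partial/\partial t$ (i.e. $g = V^2(-dt^2 + h_\Lambda)$ with $V^2 = F/(A^2(x^2+y^2))$). Two metrics are projectively equivalent if they share the same unparametrised geodesics; equivalently their Levi-Civita connections satisfy $\tilde\Gamma^i_{jk} = \Gamma^i_{jk} + \delta^i_j\omega_k + \delta^i_k\omega_j$ for some one-form $\omega$. *)

(* R : realType, points of the coordinate chart are
   row vectors p : 'rV[R]_3 with p 0 0 = y, p 0 1 = x, p 0 2 = phi. *)
From HB Require Import structures.
From mathcomp Require Import all_boot all_order all_algebra.
From mathcomp Require Import all_classical all_reals all_analysis.
Set Implicit Arguments. Unset Strict Implicit. Unset Printing Implicit Defensive.
Import Order.TTheory GRing.Theory Num.Theory.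
Import numFieldNormedType.Exports.
Local Open Scope ring_scope.

Section Defs.
Variable R : realType.

Definition ycoord (p : 'rV[R]_3) : R := p 0 0.
Definition xcoord (p : 'rV[R]_3) : R := p 0 1.

Definition pderiv (f : 'rV[R]_3 -> R) (j : 'I_3) (p : 'rV[R]_3) : R :=
  'D_(delta_mx 0 j) f p.

Definition christoffel (g : 'rV[R]_3 -> 'M[R]_3) (i j k : 'I_3) (p : 'rV[R]_3) : R :=
  \sum_(l < 3) (invmx (g p)) i l *
     (pderiv (fun q => g q l k) j p + pderiv (fun q => g q l j) k p
      - pderiv (fun q => g q j k) l p) / 2.

Definition proj_equiv_on (U : set 'rV[R]_3) (g1 g2 : 'rV[R]_3 -> 'M[R]_3) : Prop :=
  exists omega : 'rV[R]_3 -> 'rV[R]_3,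
    forall p, U p -> forall i j k : 'I_3,
      christoffel g2 i j k p =
      christoffel g1 i j k p + (i == j)%:R * omega p 0 k + (i == k)%:R * omega p 0 j.

Definition FL (A m e Lam y : R) : R :=
  y ^+ 2 - 2 * m * A * y ^+ 3 + e ^+ 2 * A ^+ 2 * y ^+ 4 - 1 - Lam / (3 * A ^+ 2).
Definition GC (A m e x : R) : R :=
  1 - x ^+ 2 - 2 * m * A * x ^+ 3 - e ^+ 2 * A ^+ 2 * x ^+ 4.

Definition hLam (A m e Lam : R) (p : 'rV[R]_3) : 'M[R]_3 :=
  let F := FL A m e Lam (ycoord p) in
  let G := GC A m e (xcoord p) in
  diag_mx (\row_(i < 3) [:: 1 / F ^+ 2; 1 / (G * F); G / F]`_i).

End Defs.

(* The optical metric is diagonal, with entries F^-2, (G F)^-1 and G / F, and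
   Lambda enters F only through an additive constant, so F' does not depend on
   Lambda.  The Christoffel symbols of a diagonal metric are explicit in its
   entries and their first derivatives; writing them out for F1 and F2 with the
   same F', G, G', their difference has the projective form
   delta^i_j omega_k + delta^i_k omega_j with omega = (F'/2) (1/F1 - 1/F2) dy. *)

From HB Require Import structures.
From mathcomp Require Import all_boot all_order all_algebra.
From mathcomp Require Import all_classical all_reals all_analysis.
From mathcomp Require Import ring.
Import Order.TTheory GRing.Theory Num.Theory.
Import numFieldNormedType.Exports.
Local Open Scope ring_scope.

Set Implicit Arguments.
Unset Strict Implicit.
Unset Printing Implicit Defensive.

Section DirectionalDerivatives.
Variables (R : numFieldType) (V W : normedModType R).

Lemma derive_along_line (f : V -> W) (x v : V) :
  'D_v f x = 'D_1 (fun h : R => f (h *: v + x)) 0.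
Proof.
rewrite /derive; set g1 := fun h => h^-1 *: _; set g2 := fun h => h^-1 *: _.
suff -> : g1 = g2 by [].
by apply/funext => h; rewrite /g1 /g2 /= addr0 scale0r add0r [_%:A]mulr1.
Qed.

Lemma is_derive_along_line (f : V -> W) (x v : V) (df : W) :
  is_derive (0 : R) (1 : R) (fun h : R => f (h *: v + x)) df ->
  is_derive x v f df.
Proof.
move=> dline; split; first by apply/derivable1P.
by rewrite derive_along_line derive_val.
Qed.

(* [is_derive_eq] with the equation typed in [R] rather than in the normed
   module carrier, so that [field] can reify it. *)
Lemma is_derive_scalar_eq (f : V -> R) (x v : V) (df df' : R) :
  is_derive x v f df' -> df' = df -> is_derive x v f df.
Proof. by move=> ? <-. Qed.

Lemma is_derive_mul (f g : V -> R) (x v : V) (df dg : R) :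
  is_derive x v f df -> is_derive x v g dg ->
  is_derive x v (fun y => f y * g y) (f x * dg + g x * df).
Proof. exact: is_deriveM. Qed.

Lemma is_derive_inv (f : V -> R) (x v : V) (df : R) :
  f x != 0 -> is_derive x v f df ->
  is_derive x v (fun y => (f y)^-1) (- (f x) ^- 2 * df).
Proof.
move=> fx0 dfx; split; first exact: derivableV.
by rewrite deriveV // derive_val.
Qed.

End DirectionalDerivatives.

Lemma invmx_diag (K : fieldType) n (d : 'rV[K]_n) :
  (forall j, d 0 j != 0) -> invmx (diag_mx d) = diag_mx (map_mx GRing.inv d).
Proof.
move=> d_neq0.
have dd1 : diag_mx d *m diag_mx (map_mx GRing.inv d) = 1%:M.
  rewrite mulmx_diag -diag_const_mx; congr diag_mx; apply/rowP => j.
  by rewrite !mxE mulfV.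
have [d_unit _] := mulmx1_unit dd1.
by rewrite -[invmx _]mulmx1 -dd1 mulmxA mulVmx // mul1mx.
Qed.

Definition diag_christoffel (K : fieldType) (d : 'I_3 -> K)
    (dd : 'I_3 -> 'I_3 -> K) (i j k : 'I_3) : K :=
  ((i == k)%:R * dd i j + (i == j)%:R * dd i k - (j == k)%:R * dd j i)
  / (2 * d i).

Section Coordinates.
Variable R : realType.
Implicit Types (p : 'rV[R]_3) (d : 'rV[R]_3 -> 'rV[R]_3).

Lemma is_derive_horner_coord (P : {poly R}) (i j : 'I_3) p :
  is_derive p (delta_mx 0 j) (fun q : 'rV[R]_3 => P.[q 0 i])
    ((j == i)%:R * P^`().[p 0 i]).
Proof.
pose Q := P \Po ('X * ((j == i)%:R)%:P + (p 0 i)%:P).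
apply: is_derive_along_line.
have -> : (fun h : R => P.[(h *: delta_mx 0 j + p) 0 i]) = horner Q.
  by apply/funext => h; rewrite /Q horner_comp !mxE !hornerE eq_sym.
apply: is_derive_eq.
by rewrite /Q deriv_comp derivD derivC derivM derivX derivC hornerM horner_comp
  !hornerE mulrC.
Qed.

Lemma pderiv_diag_mx d (l k j : 'I_3) p :
  pderiv (fun q => diag_mx (d q) l k) j p
  = (l == k)%:R * pderiv (fun q => d q 0 l) j p.
Proof.
have -> : (fun q => diag_mx (d q) l k) = (fun q => d q 0 l *+ (l == k)).
  by apply/funext => q; rewrite mxE.
case: (l == k); first by rewrite mul1r.
by rewrite mul0r; exact: derive_cst.
Qed.

Lemma christoffel_diag d (i j k : 'I_3) p :
  (forall l, d p 0 l != 0) ->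
  christoffel (fun q => diag_mx (d q)) i j k p
  = diag_christoffel (fun l => d p 0 l)
      (fun l j => pderiv (fun q => d q 0 l) j p) i j k.
Proof.
move=> d_neq0; rewrite /christoffel invmx_diag //.
rewrite (bigD1 i) //= big1 ?addr0; last first.
  by move=> l /negbTE li; rewrite !mxE eq_sym li mulr0n !mul0r.
rewrite !pderiv_diag_mx !mxE eqxx mulr1n /diag_christoffel.
by rewrite [(i == j)%:R * _]mulrC [(i == k)%:R * _]mulrC; field.
Qed.

End Coordinates.

Section OpticalDiagonal.
Variables (R : numFieldType) (V : normedModType R).

Definition optical_diag (F G : R) : 'rV[R]_3 :=
  \row_i [:: 1 / F ^+ 2; 1 / (G * F); G / F]`_i.

Definition optical_diag_deriv (F dF G dG : R) : 'rV[R]_3 :=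
  \row_i [:: -2 * dF / F ^+ 3; - (G * dF + F * dG) / (G * F) ^+ 2;
             dG / F - G * dF / F ^+ 2]`_i.

Lemma is_derive_optical_diag (Ff Gf : V -> R) (x v : V) (dF dG : R)
    (l : 'I_3) :
  is_derive x v Ff dF -> is_derive x v Gf dG -> Ff x != 0 -> Gf x != 0 ->
  is_derive x v (fun q => optical_diag (Ff q) (Gf q) 0 l)
    (optical_diag_deriv (Ff x) dF (Gf x) dG 0 l).
Proof.
move=> dFx dGx F0 G0; rewrite /optical_diag_deriv mxE.
have -> : (fun q => optical_diag (Ff q) (Gf q) 0 l)
    = (fun q => [:: (Ff q * Ff q)^-1; (Gf q * Ff q)^-1; Gf q * (Ff q)^-1]`_l).
  by apply/funext => q; rewrite mxE div1r expr2 div1r.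
case: l => [[|[|[|//]]] ?] /=.
- apply: is_derive_scalar_eq (is_derive_inv _ (is_derive_mul dFx dFx)) _.
  + exact: mulf_neq0.
  + by field.
- apply: is_derive_scalar_eq (is_derive_inv _ (is_derive_mul dGx dFx)) _.
  + exact: mulf_neq0.
  + by field; rewrite F0 G0.
- apply: is_derive_scalar_eq (is_derive_mul dGx (is_derive_inv _ dFx)) _ => //.
  by field.
Qed.

Lemma optical_diag_neq0 (F G : R) (l : 'I_3) :
  F != 0 -> G != 0 -> optical_diag F G 0 l != 0.
Proof.
move=> F0 G0; rewrite mxE.
by case: l => [[|[|[|//]]] ?] /=;
  rewrite ?div1r ?invr_neq0 ?mulf_neq0 ?expf_neq0 ?invr_neq0.
Qed.

Definition optical_christoffel (F dF G dG : R) : 'I_3 -> 'I_3 -> 'I_3 -> R :=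
  diag_christoffel (fun l => optical_diag F G 0 l)
    (fun l j => optical_diag_deriv F ((j == 0)%:R * dF) G ((j == 1)%:R * dG) 0 l).

(* omega = d log(F1 / F2) / 2, the classical d log(det h2 / det h1) / (2 (n+1))
   since det h = F^-4. *)
Definition optical_oneform (F1 F2 dF : R) : 'rV[R]_3 :=
  \row_k ((k == 0)%:R * dF / 2 * (F1^-1 - F2^-1)).

Lemma optical_christoffel_shift (F1 F2 dF G dG : R) (i j k : 'I_3) :
  F1 != 0 -> F2 != 0 -> G != 0 ->
  optical_christoffel F2 dF G dG i j k
  = optical_christoffel F1 dF G dG i j k
    + (i == j)%:R * optical_oneform F1 F2 dF 0 k
    + (i == k)%:R * optical_oneform F1 F2 dF 0 j.
Proof.
move=> F10 F20 G0; rewrite /optical_christoffel /diag_christoffel.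
case: i => [[|[|[|//]]] ?]; case: j => [[|[|[|//]]] ?];
  case: k => [[|[|[|//]]] ?]; rewrite !mxE /=; by field; rewrite ?F10 ?F20 ?G0.
Qed.

End OpticalDiagonal.

Section OpticalMetric.
Variables (R : realType) (A m e : R).

Definition Fpoly : {poly R} :=
  'X^2 - (2 * m * A)%:P * 'X^3 + (e ^+ 2 * A ^+ 2)%:P * 'X^4.
Definition Gpoly : {poly R} :=
  1 - 'X^2 - (2 * m * A)%:P * 'X^3 - (e ^+ 2 * A ^+ 2)%:P * 'X^4.

Lemma FL_horner (Lam y : R) :
  FL A m e Lam y = Fpoly.[y] - (1 + Lam / (3 * A ^+ 2)).
Proof. by rewrite /FL /Fpoly !hornerE; ring. Qed.

Lemma GC_horner (x : R) : GC A m e x = Gpoly.[x].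
Proof. by rewrite /GC /Gpoly !hornerE; ring. Qed.

Lemma is_derive_FL (Lam : R) (p : 'rV[R]_3) (j : 'I_3) :
  is_derive p (delta_mx 0 j) (fun q => FL A m e Lam (ycoord q))
    ((j == 0)%:R * Fpoly^`().[ycoord p]).
Proof.
have -> : (fun q => FL A m e Lam (ycoord q))
    = (fun q : 'rV[R]_3 => Fpoly.[q 0 0]) - cst (1 + Lam / (3 * A ^+ 2)).
  by apply/funext => q; rewrite FL_horner.
have := is_deriveB (is_derive_horner_coord Fpoly 0 j p)
  (is_derive_cst _ p (delta_mx 0 j)).
by rewrite subr0.
Qed.

Lemma is_derive_GC (p : 'rV[R]_3) (j : 'I_3) :
  is_derive p (delta_mx 0 j) (fun q => GC A m e (xcoord q))
    ((j == 1)%:R * Gpoly^`().[xcoord p]).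
Proof.
have -> : (fun q => GC A m e (xcoord q)) = (fun q : 'rV[R]_3 => Gpoly.[q 0 1]).
  by apply/funext => q; rewrite GC_horner.
exact: is_derive_horner_coord.
Qed.

Lemma christoffel_hLam (Lam : R) (p : 'rV[R]_3) (i j k : 'I_3) :
  FL A m e Lam (ycoord p) != 0 -> GC A m e (xcoord p) != 0 ->
  christoffel (hLam A m e Lam) i j k p
  = optical_christoffel (FL A m e Lam (ycoord p)) Fpoly^`().[ycoord p]
      (GC A m e (xcoord p)) Gpoly^`().[xcoord p] i j k.
Proof.
move=> F0 G0.
rewrite (christoffel_diag (d := fun q =>
  optical_diag (FL A m e Lam (ycoord q)) (GC A m e (xcoord q)))); last first.
  by move=> l; exact: optical_diag_neq0.
congr diag_christoffel; apply/funext => l; apply/funext => j'.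
have := is_derive_optical_diag l (is_derive_FL Lam p j') (is_derive_GC p j') F0 G0.
by rewrite /pderiv => dopt; rewrite derive_val.
Qed.

End OpticalMetric.

Theorem mainTheorem6 (R : realType) (A m e Lam1 Lam2 : R) :
  proj_equiv_on
    [set p : 'rV[R]_3 | 0 < FL A m e Lam1 (ycoord p) /\ 0 < FL A m e Lam2 (ycoord p)
                        /\ 0 < GC A m e (xcoord p)]
    (hLam A m e Lam1) (hLam A m e Lam2).
Proof.
exists (fun p => optical_oneform (FL A m e Lam1 (ycoord p))
  (FL A m e Lam2 (ycoord p)) (Fpoly A m e)^`().[ycoord p]).
move=> p [/lt0r_neq0 F1 [/lt0r_neq0 F2 /lt0r_neq0 G]] i j k.
rewrite !christoffel_hLam //; exact: optical_christoffel_shift.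
Qed.
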